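(* Let $W \in \mathbb{R}^{m \times D}$, let $k$ be a nonnegative integer with $k < D$ and $k < m$, and let $\mathbf{1} \in \mathbb{R}^D$ be the all-ones vector. Consider the function $$f(w_c, W_s, \Gamma) = \left\| W - w_c \mathbf{1}^{\top} - W_s \Gamma^{\top} \right\|_F^2$$ over all $w_c \in \mathbb{R}^m$, $W_s \in \mathbb{R}^{m \times k}$, $\Gamma \in \mathbb{R}^{D \times k}$ subject to the constraint $w_c \perp \mathrm{Span}(W_s)$ (the column span of $W_s$). Define: (1) $w_c := \frac{1}{D} W \mathbf{1}$; (2) $W_s := U_k \Sigma_k$ and $\Gamma := V_k$, where $U_k \Sigma_k V_k^{\top}$ is a top-$k$ truncated singular value decomposition of $W - w_c \mathbf{1}^{\top}$; (3) $M := w_c \mathbf{1}^{\top} + W_s \Gamma^{\top} \in \mathbb{R}^{m \times D}$, $v := (M^{+})^{\top} \mathbf{1} \in \mathbb{R}^m$ (where $M^+$ is the Moore–Penrose pseudoinverse of $M$), and $w_c^{\mathrm{new}} := v / \|v\|^2$; (4) $W_s^{\mathrm{new}} \in \mathbb{R}^{m\times k}$, $\Gamma^{\mathrm{new}} \in \mathbb{R}^{D \times k}$ any factorization with $W_s^{\mathrm{new}} (\Gamma^{\mathrm{new}})^{\top} = M - w_c^{\mathrm{new}} \mathbf{1}^{\top}$. Assume $M$ has rank $k+1$ (so that $v \neq 0$ and step (3) is well defined). Then $w_c^{\mathrm{new}} \perp \mathrm{Span}(W_s^{\mathrm{new}})$, and $(w_c^{\mathrm{new}}, W_s^{\mathrm{new}},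 \Gamma^{\mathrm{new}})$ is a minimizer of $f$ subject to the constraint $w_c \perp \mathrm{Span}(W_s)$; that is, the minimum of $f$ over the constraint set is attained and equals $\|W - M\|_F^2$.
   Context: $\|\cdot\|_F$ denotes the Frobenius norm. A top-$k$ truncated SVD of a matrix $A$ with SVD $A = U\Sigma V^{\top}$ (singular values in non-increasing order) is $U_k\Sigma_k V_k^{\top}$, where $U_k, V_k$ consist of the first $k$ columns of $U, V$ and $\Sigma_k$ is the leading $k\times k$ block of $\Sigma$. *)

(* Real numbers are modelled by an arbitrary real closed field. *)
From HB Require Import structures.
From mathcomp Require Import all_boot all_order all_algebra.
Set Implicit Arguments. Unset Strict Implicit. Unset Printing Implicit Defensive.
Import Order.TTheory GRing.Theory Num.Theory.
Local Open Scope ring_scope.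

Definition ones (R : rcfType) (n : nat) : 'cV[R]_n := const_mx 1.

Definition frob2 (R : rcfType) (m n : nat) (A : 'M[R]_(m, n)) : R :=
  \sum_(i < m) \sum_(j < n) A i j ^+ 2.

Definition sqnorm (R : rcfType) (m : nat) (v : 'cV[R]_m) : R :=
  \sum_(i < m) v i 0 ^+ 2.

Definition is_svd (R : rcfType) (m n : nat) (A : 'M[R]_(m, n))
  (U : 'M[R]_m) (S : 'M[R]_(m, n)) (V : 'M[R]_n) : Prop :=
  [/\ [/\ U *m U^T = 1%:M, U^T *m U = 1%:M, V *m V^T = 1%:M & V^T *m V = 1%:M],
      (forall (i : 'I_m) (j : 'I_n), val i <> val j -> S i j = 0),
      (forall (i : 'I_m) (j : 'I_n), val i = val j -> 0 <= S i j),
      (forall (i i' : 'I_m) (j j' : 'I_n), val i = val j -> val i' = val j' ->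
          (val i <= val i')%N -> S i' j' <= S i j)
    & A = U *m S *m V^T].

Definition truncated_svd (R : rcfType) (m n k : nat) (A : 'M[R]_(m, n))
  (Uk : 'M[R]_(m, k)) (Sk : 'M[R]_k) (Vk : 'M[R]_(n, k)) : Prop :=
  exists (U : 'M[R]_m) (S : 'M[R]_(m, n)) (V : 'M[R]_n),
    [/\ is_svd A U S V,
        (forall (i : 'I_m) (j : 'I_k) (j' : 'I_m), val j = val j' -> Uk i j = U i j'),
        (forall (i : 'I_n) (j : 'I_k) (j' : 'I_n), val j = val j' -> Vk i j = V i j')
      & (forall (a b : 'I_k) (a' : 'I_m) (b' : 'I_n), val a = val a' -> val b = val b' ->
           Sk a b = S a' b')].

Definition is_pinv (R : rcfType) (m n : nat) (M : 'M[R]_(m, n)) (P : 'M[R]_(n, m)) : Prop :=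
  [/\ M *m P *m M = M, P *m M *m P = P, (M *m P)^T = M *m P & (P *m M)^T = P *m M].

Definition fobj (R : rcfType) (m D k : nat) (W : 'M[R]_(m, D)) (wc : 'cV[R]_m)
  (Ws : 'M[R]_(m, k)) (G : 'M[R]_(D, k)) : R :=
  frob2 (W - wc *m (ones R D)^T - Ws *m G^T).

Definition orth_span (R : rcfType) (m k : nat) (wc : 'cV[R]_m) (Ws : 'M[R]_(m, k)) : Prop :=
  wc^T *m Ws = 0.

(* Right multiplication by the centering projector K = I - 1 1^T / D does not
   increase the Frobenius norm and annihilates every term w 1^T, so
   f(w_c, W_s, Gamma) >= ||W K - W_s (K Gamma)^T||^2, the error of a rank-k
   approximation of the centered matrix W K = W - w_c 1^T.  By Eckart-Young this
   is at least the error of the truncated SVD of W K, which is ||W - M||^2; the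
   new triple reproduces M, so it attains the bound.
   For the constraint: rank M = k + 1 forces 1^T into the row space of M, so the
   Penrose identity M P M = M gives v^T M = 1^T and hence w^T (M - w 1^T) = 0
   for w = v / |v|^2.  As M - w 1^T = W_s^new Gamma^new^T still has rank >= k,
   Gamma^new has full column rank and can be cancelled. *)

From HB Require Import structures.
From mathcomp Require Import all_boot all_order all_algebra.
From mathcomp Require Import lra.
Set Implicit Arguments. Unset Strict Implicit. Unset Printing Implicit Defensive.
Import Order.TTheory GRing.Theory Num.Theory.
Local Open Scope ring_scope.

Section Frobenius.
Variable R : rcfType.

Definition is_orthoproj n (B : 'M[R]_n) := B^T = B /\ B *m B = B.

Lemma frob2_trace m n (A : 'M[R]_(m, n)) : frob2 A = \tr (A *m A^T).
Proof.
rewrite /frob2 /mxtrace; apply: eq_bigr => i _; rewrite mxE.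
by apply: eq_bigr => j _; rewrite mxE expr2.
Qed.

Lemma frob2_ge0 m n (A : 'M[R]_(m, n)) : 0 <= frob2 A.
Proof. by apply: sumr_ge0 => i _; apply: sumr_ge0 => j _; apply: sqr_ge0. Qed.

Lemma frob2_mul_orth m n p q (U : 'M[R]_(p, m)) (A : 'M[R]_(m, n)) (V : 'M[R]_(q, n)) :
  U^T *m U = 1%:M -> V^T *m V = 1%:M -> frob2 (U *m A *m V^T) = frob2 A.
Proof.
move=> hU hV; rewrite !frob2_trace !trmx_mul !trmxK.
by rewrite -!mulmxA (mulmxA V^T) hV mul1mx mxtrace_mulC -!mulmxA hU mulmx1.
Qed.

Lemma frob2D_orth m n (X Y : 'M[R]_(m, n)) :
  X *m Y^T = 0 -> frob2 (X + Y) = frob2 X + frob2 Y.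
Proof.
move=> hXY; have hYX : Y *m X^T = 0 by rewrite -[Y]trmxK -trmx_mul hXY trmx0.
rewrite !frob2_trace linearD /= mulmxDl !mulmxDr hXY hYX.
by rewrite !mxtraceD mxtrace0 add0r addr0.
Qed.

Lemma orthoproj1B n (B : 'M[R]_n) : is_orthoproj B -> is_orthoproj (1%:M - B).
Proof.
case=> hT hI; split; first by rewrite linearB /= trmx1 hT.
by rewrite mulmxBl mul1mx mulmxBr mulmx1 hI subrr subr0.
Qed.

Lemma orthoproj_mul_tr n k (Z : 'M[R]_(n, k)) : Z^T *m Z = 1%:M -> is_orthoproj (Z *m Z^T).
Proof.
by move=> hZ; split; [rewrite trmx_mul trmxK | rewrite mulmxA -(mulmxA Z) hZ mulmx1].
Qed.

Lemma frob2_mul_orthoproj_le m n (E : 'M[R]_(m, n)) (B : 'M[R]_n) :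
  is_orthoproj B -> frob2 (E *m B) <= frob2 E.
Proof.
move=> [hT hI]; have hE : E = E *m B + E *m (1%:M - B).
  by rewrite mulmxBr mulmx1 addrC subrK.
rewrite [X in _ <= frob2 X]hE frob2D_orth ?lerDl ?frob2_ge0 //.
rewrite trmx_mul linearB /= trmx1 hT -mulmxA (mulmxA B).
by rewrite mulmxBr mulmx1 hI subrr mul0mx mulmx0.
Qed.

Lemma mulmx_trcV n (z : 'cV[R]_n) : z^T *m z = (sqnorm z)%:M.
Proof.
rewrite [LHS]mx11_scalar mxE; congr (_%:M); apply: eq_bigr => i _.
by rewrite mxE expr2.
Qed.

Lemma sqnorm_gt0 n (z : 'cV[R]_n) : z != 0 -> 0 < sqnorm z.
Proof.
move=> hz; have z0 : 0 <= sqnorm z by apply: sumr_ge0 => i _; apply: sqr_ge0.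
rewrite lt0r z0 andbT; apply: contra hz => /eqP hz0.
have zi0 := psumr_eq0P (fun i _ => sqr_ge0 (z i 0)) hz0.
by apply/eqP/matrixP => i j; rewrite ord1 mxE; apply/eqP; rewrite -sqrf_eq0 zi0.
Qed.

End Frobenius.

Section GramSchmidt.
Variable R : rcfType.

Lemma normalize_cV n (z : 'cV[R]_n) : z != 0 ->
  exists c : R, (c *: z)^T *m (c *: z) = 1%:M /\ (c *: z) *m ((c *: z)^T *m z) = z.
Proof.
move=> hz; set c := (Num.sqrt (sqnorm z))^-1; exists c.
have hc : c ^+ 2 * sqnorm z = 1.
  by rewrite exprVn sqr_sqrtr ?ltW ?sqnorm_gt0 // mulVf ?gt_eqF ?sqnorm_gt0.
have -> : (c *: z)^T = c *: z^T by rewrite linearZ.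
rewrite -!scalemxAl -!scalemxAr mulmx_trcV mul_mx_scalar !scalerA.
by rewrite scale_scalar_mx mulrA -expr2 hc scale1r.
Qed.

Lemma exists_nonzero_orth n k (Q : 'M[R]_(n, k)) : (k < n)%N ->
  exists2 z : 'cV[R]_n, z != 0 & Q^T *m z = 0.
Proof.
move=> hkn; have : kermx Q != 0.
  rewrite -mxrank_eq0 mxrank_ker subn_eq0 -ltnNge.
  exact: leq_ltn_trans (rank_leq_col Q) hkn.
case: (pickP (fun i => row i (kermx Q) != 0)) => [i hi _ | hK]; last first.
  by case/eqP; apply/row_matrixP => i; rewrite row0; apply/eqP/negbFE/hK.
exists (row i (kermx Q))^T; first by rewrite trmx_eq0.
by rewrite -[LHS]trmxK trmx_mul !trmxK (sub_kermxP (row_sub i _)) trmx0.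
Qed.

Lemma orthonormal_extend n k (Q : 'M[R]_(n, k)) (y : 'cV[R]_n) :
  (k < n)%N -> Q^T *m Q = 1%:M ->
  exists q : 'cV[R]_n,
    [/\ Q^T *m q = 0, q^T *m q = 1%:M & y = Q *m (Q^T *m y) + q *m (q^T *m y)].
Proof.
move=> hkn hQ; set r := y - Q *m (Q^T *m y).
have hy : y = Q *m (Q^T *m y) + r by rewrite addrC subrK.
have hQr : Q^T *m r = 0 by rewrite mulmxBr !mulmxA hQ mul1mx subrr.
have [z [hz hQz hrz]] : exists z, [/\ z != 0, Q^T *m z = 0 & r = 0 \/ r = z].
  have [r0|hr] := eqVneq r 0; last by exists r; split; [|exact: hQr|right].
  by have [z hz hQz] := exists_nonzero_orth Q hkn; exists z; split; [| |left].
have [c [hq hqz]] := normalize_cV hz.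
have hQq : Q^T *m (c *: z) = 0 by rewrite -scalemxAr hQz scaler0.
have hqQ : (c *: z)^T *m Q = 0 by rewrite -[LHS]trmxK trmx_mul !trmxK hQq trmx0.
exists (c *: z); split => //.
have -> : (c *: z)^T *m y = (c *: z)^T *m r by rewrite {1}hy mulmxDr mulmxA hqQ mul0mx add0r.
by case: hrz => hr; rewrite {1}hy hr ?mulmx0 // hqz.
Qed.

Lemma orthonormal_factor n k (Y : 'M[R]_(n, k)) : (k <= n)%N ->
  exists Q : 'M[R]_(n, k), exists T : 'M[R]_k, Q^T *m Q = 1%:M /\ Y = Q *m T.
Proof.
elim: k Y => [|k IH] Y hk.
  by exists 0, 0; split; apply/matrixP => ? [].
move: Y; rewrite -[k.+1]/(1 + k)%N => Y.
have [Q [T [hQ hYr]]] := IH (rsubmx Y) (ltnW hk).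
have [q [hQq hq hYl]] := orthonormal_extend (lsubmx Y) hk hQ.
have hqQ : q^T *m Q = 0 by rewrite -[LHS]trmxK trmx_mul !trmxK hQq trmx0.
exists (row_mx q Q), (block_mx (q^T *m lsubmx Y) 0 (Q^T *m lsubmx Y) T); split.
  by rewrite tr_row_mx mul_col_row hQq hq hQ hqQ -scalar_mx_block.
by rewrite mul_row_block mulmx0 add0r addrC -hYl -hYr hsubmxK.
Qed.

End GramSchmidt.

Section EckartYoung.
Variable R : rcfType.

Lemma mxtrace_pid n k : (k <= n)%N -> \tr (pid_mx k : 'M[R]_n) = k%:R.
Proof.
move=> hk; have -> : (pid_mx k : 'M[R]_n) = (pid_mx k : 'M_(n, k)) *m pid_mx k.
  by rewrite mul_pid_mx !minnn.
by rewrite mxtrace_mulC mul_pid_mx minnn (minn_idPr hk) pid_mx_1 mxtrace1.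
Qed.

Lemma orthoproj_pid n k : (k <= n)%N -> is_orthoproj (pid_mx k : 'M[R]_n).
Proof. by move=> hk; split; [rewrite tr_pid_mx | rewrite pid_mx_id]. Qed.

Lemma orthoproj_diag_bound n (B : 'M[R]_n) : is_orthoproj B -> forall i, 0 <= B i i <= 1.
Proof.
case=> hT hI i; have hBii : B i i = \sum_j B i j ^+ 2.
  by rewrite -{1}hI mxE; apply: eq_bigr => j _; rewrite -{2}hT mxE expr2.
have h0 : 0 <= B i i by rewrite hBii sumr_ge0 // => j _; apply: sqr_ge0.
have h1 : B i i ^+ 2 <= B i i.
  by rewrite [leRHS]hBii (bigD1 i) //= lerDl sumr_ge0 // => j _; apply: sqr_ge0.
by rewrite h0 /=; nra.
Qed.

Lemma frob2_sub_proj_le m n k (A : 'M[R]_(m, n)) (Q : 'M[R]_(n, k)) (B : 'M[R]_(m, k)) :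
  Q^T *m Q = 1%:M -> frob2 (A - A *m Q *m Q^T) <= frob2 (A - B *m Q^T).
Proof.
move=> hQ; have -> : A - B *m Q^T = (A - A *m Q *m Q^T) + (A *m Q - B) *m Q^T.
  by rewrite mulmxBl addrA subrK.
rewrite (frob2D_orth (X := A - A *m Q *m Q^T)) ?lerDl ?frob2_ge0 //.
by rewrite trmx_mul trmxK mulmxA mulmxBl -!mulmxA hQ mulmx1 subrr mul0mx.
Qed.

Lemma sum_weighted_le_pid n k (hk : (k < n)%N) (lam c : 'I_n -> R) :
  (forall i j : 'I_n, (i <= j)%N -> lam j <= lam i) ->
  (forall i, 0 <= c i <= 1) -> \sum_i c i = k%:R ->
  \sum_i c i * lam i <= \sum_i (pid_mx k : 'M[R]_n) i i * lam i.
Proof.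
move=> hlam hc hsum; set d := fun i => (pid_mx k : 'M[R]_n) i i.
have hd : \sum_i d i = k%:R by rewrite -(mxtrace_pid (ltnW hk)).
(* Compare termwise with the pivot value [lam k]; the right-hand side sums to 0. *)
set L := lam (Ordinal hk).
have : \sum_i (c i * lam i - d i * lam i) <= \sum_i L * (c i - d i).
  apply: ler_sum => i _; rewrite /d mxE eqxx /=.
  have /andP[c0 c1] := hc i; have [ik|ki] := ltnP i k; rewrite ?mulr1n ?mulr0n.
    have : L <= lam i by apply: hlam; rewrite /= ltnW.
    nra.
  have : lam i <= L by apply: hlam.
  nra.
by rewrite sumrB -mulr_sumr sumrB hsum hd subrr mulr0 subr_le0.
Qed.

Lemma svd_gram_offdiag m n (A : 'M[R]_(m, n)) U S V (i j : 'I_n) :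
  is_svd A U S V -> i != j -> (S^T *m S) i j = 0.
Proof.
case=> _ hdiag _ _ _ hij; rewrite mxE big1 // => l _; rewrite mxE.
have [li|li] := eqVneq (val l) (val i); last by rewrite hdiag ?mul0r //; apply/eqP.
rewrite [S l j]hdiag ?mulr0 // li => /val_inj ij.
by rewrite ij eqxx in hij.
Qed.

Lemma svd_gram_diag_nonincr m n (A : 'M[R]_(m, n)) U S V (i j : 'I_n) :
  is_svd A U S V -> (i <= j)%N -> (S^T *m S) j j <= (S^T *m S) i i.
Proof.
case=> _ hdiag hnn hsort _ hij.
have gramE (l : 'I_n) : (S^T *m S) l l = \sum_a S a l ^+ 2.
  by rewrite mxE; apply: eq_bigr => a _; rewrite mxE expr2.
have gram_at (l : 'I_n) (a : 'I_m) : val a = val l -> (S^T *m S) l l = S a l ^+ 2.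
  move=> al; rewrite gramE (bigD1 a) //= big1 ?addr0 // => b ba.
  rewrite hdiag ?expr0n //= => bl; move/negP: ba; apply; apply/eqP/val_inj.
  by rewrite /= bl al.
have [jm|mj] := ltnP j m; last first.
  rewrite gramE big1 => [|a _]; first by rewrite gramE sumr_ge0 // => a _; apply: sqr_ge0.
  by rewrite hdiag ?expr0n //= => aj; move: (ltn_ord a); rewrite aj ltnNge mj.
have im : (i < m)%N := leq_ltn_trans hij jm.
rewrite (gram_at j (Ordinal jm)) // (gram_at i (Ordinal im)) //.
have := hsort (Ordinal im) (Ordinal jm) i j erefl erefl hij.
have := hnn (Ordinal jm) j erefl.
rewrite !expr2; nra.
Qed.

Lemma frob2_svd_proj m n (A : 'M[R]_(m, n)) U S V (B : 'M[R]_n) :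
  is_svd A U S V -> is_orthoproj B ->
  frob2 (U *m (S *m (1%:M - B)) *m V^T) =
  \tr (S^T *m S) - \sum_i B i i * (S^T *m S) i i.
Proof.
move=> hsvd hB; have [[_ hU _ hV] _ _ _ _] := hsvd.
have [hT hI] := orthoproj1B hB.
rewrite frob2_mul_orth // frob2_trace trmx_mul hT mulmxA -(mulmxA S) hI.
rewrite mxtrace_mulC mulmxA /mxtrace -sumrB; apply: eq_bigr => i _.
rewrite mxE (bigD1 i) //= big1 ?addr0 => [|j ji]; last first.
  by rewrite (svd_gram_offdiag hsvd) ?mul0r // eq_sym.
by rewrite !mxE eqxx mulr1n mulrBr mulr1 mulrC.
Qed.

(* With Q an orthonormal basis of the columns of Y, X Y^T is no better than
   A Q Q^T, whose error weights the squared singular values by 1 - diag(Z Z^T)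
   for the rank-k projector Z Z^T, Z = V^T Q; the top-k weights do best (Ky Fan). *)
Lemma eckart_young_svd m n k (A : 'M[R]_(m, n)) U S V
    (X : 'M[R]_(m, k)) (Y : 'M[R]_(n, k)) :
  (k < n)%N -> is_svd A U S V ->
  frob2 (U *m (S *m copid_mx k) *m V^T) <= frob2 (A - X *m Y^T).
Proof.
move=> hk hsvd; have [[_ _ hVV _] _ _ _ hA] := hsvd.
have [Q [T [hQ ->]]] := orthonormal_factor Y (ltnW hk).
set Z := V^T *m Q.
have hZ : Z^T *m Z = 1%:M by rewrite trmx_mul trmxK mulmxA -(mulmxA Q^T) hVV mulmx1.
rewrite trmx_mul [X *m _]mulmxA; apply: le_trans (frob2_sub_proj_le A (X *m T^T) hQ).
have -> : A - A *m Q *m Q^T = U *m (S *m (1%:M - Z *m Z^T)) *m V^T.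
  rewrite hA trmx_mul trmxK !mulmxBr !mulmx1 mulmxBl; congr (_ - _).
  by rewrite !mulmxA -(mulmxA _ V) hVV mulmx1.
rewrite /copid_mx !(frob2_svd_proj hsvd); last 2 first.
- exact: orthoproj_mul_tr hZ.
- exact: orthoproj_pid (ltnW hk).
rewrite lerD2l lerN2.
apply: (sum_weighted_le_pid hk (lam := fun i => (S^T *m S) i i)
                             (c := fun i => (Z *m Z^T) i i)) => [i j|i|].
- exact: svd_gram_diag_nonincr hsvd.
- exact: orthoproj_diag_bound (orthoproj_mul_tr hZ) i.
- by rewrite -/(mxtrace (Z *m Z^T)) mxtrace_mulC hZ mxtrace1.
Qed.

Lemma mul_pid_mx_col p n k (A : 'M[R]_(p, n)) (hk : (k <= n)%N) i (j : 'I_k) :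
  (A *m (pid_mx k : 'M[R]_(n, k))) i j = A i (widen_ord hk j).
Proof.
rewrite mxE (bigD1 (widen_ord hk j)) //= big1 ?addr0 => [|l hl].
  by rewrite mxE /= eqxx ltn_ord mulr1.
rewrite mxE (_ : val l == val j = false) ?mulr0 //.
by apply: contraNF hl => /eqP lj; apply/eqP/val_inj.
Qed.

Lemma pid_mx_mul_diag m n k (S : 'M[R]_(m, n)) :
  (forall (i : 'I_m) (j : 'I_n), val i <> val j -> S i j = 0) ->
  (pid_mx k : 'M[R]_m) *m S = S *m (pid_mx k : 'M[R]_n).
Proof.
move=> hS; apply/matrixP => i j; rewrite !mxE (bigD1 i) // (bigD1 j) //= !big1 ?addr0.
- rewrite !mxE !eqxx /=; have [ij|ij] := eqVneq (val i) (val j).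
    by rewrite ij mulrC.
  by rewrite hS ?mulr0 ?mul0r //; apply/eqP.
- move=> l lj; rewrite mxE (_ : val l == val j = false) ?mulr0 //.
  by apply: contraNF lj => /eqP lj; apply/eqP/val_inj.
- move=> l li; rewrite mxE (_ : val i == val l = false) ?mul0r //.
  by apply: contraNF li => /eqP il; apply/eqP/val_inj.
Qed.

Lemma truncated_svd_residual m n k (A : 'M[R]_(m, n))
    (Uk : 'M[R]_(m, k)) (Sk : 'M[R]_k) (Vk : 'M[R]_(n, k)) :
  (k <= m)%N -> (k <= n)%N -> truncated_svd A Uk Sk Vk ->
  exists U S V, is_svd A U S V /\ A - Uk *m Sk *m Vk^T = U *m (S *m copid_mx k) *m V^T.
Proof.
move=> hkm hkn [U [S [V [hsvd hU hV hS]]]]; exists U, S, V; split => //.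
have eU : Uk = U *m pid_mx k by apply/matrixP => i j; rewrite mul_pid_mx_col; apply: hU.
have eV : Vk = V *m pid_mx k by apply/matrixP => i j; rewrite mul_pid_mx_col; apply: hV.
have eS : Sk = (pid_mx k : 'M_(k, m)) *m S *m pid_mx k.
  apply/matrixP => a b; rewrite mul_pid_mx_col -[_ *m S]trmxK trmx_mul tr_pid_mx.
  by rewrite mxE mul_pid_mx_col mxE; apply: hS.
have [_ hdiag _ _ hA] := hsvd.
have P1 : (pid_mx k : 'M[R]_(m, k)) *m (pid_mx k : 'M_(k, m)) = pid_mx k.
  by rewrite mul_pid_mx !minnn.
have P2 : (pid_mx k : 'M[R]_(n, k)) *m (pid_mx k : 'M_(k, n)) = pid_mx k.
  by rewrite mul_pid_mx !minnn.
rewrite eU eV eS trmx_mul tr_pid_mx !mulmxA -(mulmxA U) P1.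
rewrite -(mulmxA _ _ (pid_mx k : 'M_(k, n))) P2 -(mulmxA U) pid_mx_mul_diag //.
rewrite !mulmxA -(mulmxA (U *m S)) pid_mx_id //.
by rewrite {1}hA /copid_mx mulmxBr mulmx1 mulmxBl.
Qed.

Theorem eckart_young m n k (A : 'M[R]_(m, n))
    (Uk : 'M[R]_(m, k)) (Sk : 'M[R]_k) (Vk : 'M[R]_(n, k))
    (X : 'M[R]_(m, k)) (Y : 'M[R]_(n, k)) :
  (k <= m)%N -> (k < n)%N -> truncated_svd A Uk Sk Vk ->
  frob2 (A - Uk *m Sk *m Vk^T) <= frob2 (A - X *m Y^T).
Proof.
move=> hkm hkn /(truncated_svd_residual hkm (ltnW hkn)) [U [S [V [hsvd ->]]]].
exact: eckart_young_svd.
Qed.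

End EckartYoung.

Section Centering.
Variables (R : rcfType) (D : nat).
Hypothesis D_gt0 : (0 < D)%N.

Definition centering : 'M[R]_D := 1%:M - (D%:R)^-1 *: (ones R D *m (ones R D)^T).

Lemma ones_tr_ones : (ones R D)^T *m ones R D = (D%:R)%:M.
Proof.
rewrite [LHS]mx11_scalar mxE; congr (_%:M).
by rewrite (eq_bigr (fun _ => 1)) ?sumr_const ?card_ord // => i _; rewrite !mxE mulr1.
Qed.

Let D_neq0 : (D%:R : R) != 0. Proof. by rewrite pnatr_eq0 -lt0n. Qed.

Lemma orthoproj_centering : is_orthoproj centering.
Proof.
apply: orthoproj1B; split; first by rewrite linearZ /= trmx_mul trmxK.
rewrite -scalemxAl -scalemxAr scalerA mulmxA -(mulmxA (ones R D)) ones_tr_ones.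
by rewrite mul_mx_scalar -scalemxAl scalerA mulrAC -mulrA mulfV // mulr1.
Qed.

Lemma ones_tr_centering : (ones R D)^T *m centering = 0.
Proof.
rewrite mulmxBr mulmx1 -scalemxAr mulmxA ones_tr_ones mul_scalar_mx scalerA.
by rewrite mulVf // scale1r subrr.
Qed.

Lemma mul_centering m (W : 'M[R]_(m, D)) :
  W *m centering = W - ((D%:R)^-1 *: (W *m ones R D)) *m (ones R D)^T.
Proof. by rewrite mulmxBr mulmx1 -scalemxAr -scalemxAl mulmxA. Qed.

Lemma fobj_ge_centered m k (W : 'M[R]_(m, D)) wc (Ws : 'M[R]_(m, k)) G :
  frob2 (W *m centering - Ws *m (centering *m G)^T) <= fobj W wc Ws G.
Proof.
have [hT _] := orthoproj_centering.
have -> : Ws *m (centering *m G)^T = Ws *m G^T *m centering by rewrite trmx_mul hT mulmxA.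
apply: le_trans (frob2_mul_orthoproj_le _ orthoproj_centering).
by rewrite /fobj !mulmxBl -[wc *m _ *m _]mulmxA ones_tr_centering mulmx0 subr0.
Qed.

End Centering.

Section RankOneUpdate.
Variable R : rcfType.

Lemma submx_mul_full_rank p r n (C : 'M[R]_(p, r)) (B : 'M[R]_(r, n)) :
  \rank (C *m B) = r -> (B <= C *m B)%MS.
Proof.
move=> hr; have [_ <-] := mxrank_leqif_sup (submxMl C B).
by rewrite eqn_leq mxrankM_maxr hr rank_leq_row.
Qed.

Lemma row_free_mul_rank p k n (X : 'M[R]_(p, k)) (Y : 'M[R]_(k, n)) :
  (k <= \rank (X *m Y))%N -> row_free Y.
Proof.
move=> hk; rewrite /row_free eqn_leq rank_leq_row.
exact: leq_trans hk (mxrankM_maxr X Y).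
Qed.

Lemma pinv_mul_submx m n p (M : 'M[R]_(m, n)) (P : 'M[R]_(n, m)) (u : 'M[R]_(p, n)) :
  is_pinv M P -> (u <= M)%MS -> u *m P *m M = u.
Proof. by case=> hMPM _ _ _ /submxP[x ->]; rewrite -!mulmxA (mulmxA M) hMPM. Qed.

Lemma orth_rescaled_update m n (M : 'M[R]_(m, n)) (v : 'cV[R]_m) (b : 'rV[R]_n) :
  v != 0 -> v^T *m M = b ->
  ((sqnorm v)^-1 *: v)^T *m (M - ((sqnorm v)^-1 *: v) *m b) = 0.
Proof.
move=> hv hvM; have s0 : sqnorm v != 0 by rewrite gt_eqF ?sqnorm_gt0.
rewrite linearZ /= mulmxBr -!scalemxAl hvM -scalemxAr mulmxA mulmx_trcV mul_scalar_mx.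
by rewrite [_ *: (_ *: b)]scalerA mulVf // scale1r subrr.
Qed.

End RankOneUpdate.

Lemma orth_span_pinv_update (R : rcfType) m D k (wc : 'cV[R]_m) (Ws : 'M[R]_(m, k))
    (G : 'M[R]_(D, k)) (P : 'M[R]_(D, m)) (Wsn : 'M[R]_(m, k)) (Gn : 'M[R]_(D, k)) :
  (0 < D)%N ->
  let M := wc *m (ones R D)^T + Ws *m G^T in
  \rank M = k.+1 -> is_pinv M P ->
  let v := P^T *m ones R D in
  let wn := (sqnorm v)^-1 *: v in
  Wsn *m Gn^T = M - wn *m (ones R D)^T -> orth_span wn Wsn.
Proof.
move=> hD M hrank hP v wn hfact.
have h1M : ((ones R D)^T <= M)%MS.
  have hMB : M = row_mx wc Ws *m col_mx (ones R D)^T G^T by rewrite mul_row_col.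
  have sBM : (col_mx (ones R D)^T G^T <= M)%MS.
    by rewrite hMB submx_mul_full_rank // -hMB hrank.
  apply: submx_trans sBM; apply/submxP; exists (row_mx 1%:M 0 : 'M_(1, 1 + k)).
  by rewrite mul_row_col mul1mx mul0mx addr0.
have hvM : v^T *m M = (ones R D)^T by rewrite trmx_mul trmxK pinv_mul_submx.
have hv : v != 0.
  apply/eqP => v0; move: hvM; rewrite v0 trmx0 mul0mx => /matrixP/(_ 0 (Ordinal hD)).
  by rewrite !mxE => /eqP; rewrite eq_sym oner_eq0.
have hGn : row_free Gn^T.
  apply: (@row_free_mul_rank _ _ _ _ Wsn); rewrite -ltnS -hrank.
  have -> : M = Wsn *m Gn^T + wn *m (ones R D)^T by rewrite hfact subrK.
  apply: leq_trans (mxrank_add _ _) _; rewrite -[(\rank _).+1]addn1 leq_add2l.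
  exact: leq_trans (mxrankM_maxr _ _) (rank_leq_row _).
apply/eqP; rewrite -(mulmx_free_eq0 _ hGn) -mulmxA hfact.
by rewrite (orth_rescaled_update hv hvM).
Qed.

Theorem theorem1 (R : rcfType) (m D k : nat) (W : 'M[R]_(m, D))
  (hkD : (k < D)%N) (hkm : (k < m)%N)
  (Uk : 'M[R]_(m, k)) (Sk : 'M[R]_k) (Vk : 'M[R]_(D, k))
  (P : 'M[R]_(D, m)) (Wsn : 'M[R]_(m, k)) (Gn : 'M[R]_(D, k)) :
  let wc : 'cV[R]_m := (D%:R)^-1 *: (W *m ones R D) in
  truncated_svd (W - wc *m (ones R D)^T) Uk Sk Vk ->
  let Ws := Uk *m Sk in
  let G := Vk in
  let M := wc *m (ones R D)^T + Ws *m G^T in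
  \rank M = k.+1 ->
  is_pinv M P ->
  let v : 'cV[R]_m := P^T *m ones R D in
  let wn := (sqnorm v)^-1 *: v in
  Wsn *m Gn^T = M - wn *m (ones R D)^T ->
  orth_span wn Wsn /\
  (forall (wc' : 'cV[R]_m) (Ws' : 'M[R]_(m, k)) (G' : 'M[R]_(D, k)),
      orth_span wc' Ws' -> frob2 (W - M) <= fobj W wc' Ws' G') /\
  fobj W wn Wsn Gn = frob2 (W - M).
Proof.
move=> wc hsvd Ws G M hrank hP v wn hfact.
have hD : (0 < D)%N := leq_ltn_trans (leq0n k) hkD.
split; [|split].
- exact: orth_span_pinv_update hD hrank hP hfact.
- move=> wc' Ws' G' _; apply: le_trans (fobj_ge_centered hD W wc' Ws' G').
  rewrite mul_centering /M opprD addrA /Ws /G.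
  exact: eckart_young (ltnW hkm) hkD hsvd.
- by rewrite /fobj hfact opprB addrA subrK.
Qed.
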